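(* Let $(S,K,I)$ be an active split graph such that $\Phi=\Phi(S)$ is simple and connected. Then exactly one of the following holds: (1) $\Phi$ is complete and $|K|=|I|$; (2) $|K|=\omega(\Phi)<|I|$, and every vertex of $\Phi$ belongs to some maximum clique of $\Phi$; in particular $|K|\le 1+\min\{\deg_{\Phi}(v): v\in I\}$.
   Context: All graphs are finite and simple. A split graph is a graph $S$ whose vertex set is a disjoint union $V(S)=K\,\dot\cup\,I$ with $K$ a clique and $I$ an independent set; $(K,I)$ is called a bipartition of $S$, and $(S,K,I)$ denotes $S$ together with this fixed bipartition. A 2-switch in a graph $G$ is performed on four distinct vertices $a,b,c,d$ with $ab,cd\in E(G)$ and $ac,bd\notin E(G)$: it deletes $ab,cd$ and adds $ac,bd$; $a,b,c,d$ are said to participate in it. A vertex is active in $G$ if it participates in some 2-switch on $G$; $G$ is active if all its vertices are active. For a split graph $(S,K,I)$ and distinct $u,v\in I$, $\sigma_{uv}(S)$ is the number of induced subgraphs of $S$ isomorphic to $P_4$ containing both $u$ and $v$. The factor graph $\Phi(S)$ is the loopless multigraph with vertex set $I$ having exactly $\sigma_{uv}(S)$ parallel edges between $u$ and $v$; it is simple if $\sigma_{uv}(S)\in\{0,1\}$ for all $u,v$. Graph notions (connected, complete, clique, clique number $\omega(\Phi)$, degree $\deg_\Phi$, etc.) applied to $\Phi(S)$ refer to its underlying simple graph, in which $u\sim v$ iff $\sigma_{uv}(S)\ge1$. *)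

From mathcomp Require Import all_boot.
Set Implicit Arguments. Unset Strict Implicit. Unset Printing Implicit Defensive.

Section Defs.
Variables (T : finType) (e : rel T).

Definition simple_graph : Prop := symmetric e /\ irreflexive e.

Definition split_bipartition (K I : {set T}) : Prop :=
  [/\ K :&: I = set0, K :|: I = [set: T],
      (forall x y, x \in K -> y \in K -> x != y -> e x y) &
      (forall x y, x \in I -> y \in I -> ~~ e x y)].

Definition two_switch (a b c d : T) : bool :=
  [&& uniq [:: a; b; c; d], e a b, e c d, ~~ e a c & ~~ e b d].

Definition active_vertex (v : T) : Prop :=
  exists a b c d, two_switch a b c d /\ v \in [:: a; b; c; d].

Definition active_graph : Prop := forall v : T, active_vertex v.

Definition induced_P4 (X : {set T}) : bool :=
  [exists a, exists b, exists c, exists d,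
    [&& uniq [:: a; b; c; d], X == [set a; b; c; d],
        e a b, e b c, e c d, ~~ e a c, ~~ e b d & ~~ e a d]].

Definition sigma (u v : T) : nat :=
  #|[set X : {set T} | [&& u \in X, v \in X & induced_P4 X]]|.

Section Factor.
Variable I : {set T}.

(* underlying simple graph of the factor graph Phi(S) on vertex set I *)
Definition phi_adj (u v : T) : bool :=
  [&& u \in I, v \in I, u != v & 0 < sigma u v].

Definition phi_simple : Prop :=
  forall u v, u \in I -> v \in I -> u != v -> sigma u v <= 1.

Definition phi_connected : Prop :=
  forall u v, u \in I -> v \in I -> connect phi_adj u v.

Definition phi_complete : Prop :=
  forall u v, u \in I -> v \in I -> u != v -> phi_adj u v.

Definition phi_clique (C : {set T}) : bool :=
  (C \subset I) && [forall u in C, forall v in C, (u != v) ==> phi_adj u v].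

Definition phi_omega : nat := \max_(C : {set T} | phi_clique C) #|C|.

Definition phi_max_clique (C : {set T}) : bool :=
  phi_clique C && (#|C| == phi_omega).

Definition phi_deg (v : T) : nat := #|[set w | phi_adj v w]|.
End Factor.
End Defs.

From mathcomp Require Import all_boot.
Set Implicit Arguments. Unset Strict Implicit. Unset Printing Implicit Defensive.

(* Write N(u) ⊆ K for the neighbourhood of u ∈ I. The induced P4's through
   two vertices u, v of I are exactly the paths u-x-y-v with x ∈ N(u)\N(v) and
   y ∈ N(v)\N(u), so sigma_uv = |N(u)\N(v)|·|N(v)\N(u)|. Simplicity and
   connectivity of Phi therefore force all N(u) to have the same size, any two
   distinct ones to differ by exchanging a single element, and u ~ v in Phi iff
   N(u) <> N(v). Activity puts every vertex of K inside some N(u) and outside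
   another; a family of equal-size sets with these properties consists either
   of singletons or of complements of singletons in K. Either way Phi is the
   complete multipartite graph whose parts are the fibres of a surjection
   g : I -> K, and both alternatives are read off from that description. *)

Lemma card_setD_sym (T : finType) (A B : {set T}) :
  #|A| = #|B| -> #|A :\: B| = #|B :\: A|.
Proof.
by move=> AB; apply/eqP; rewrite -(eqn_add2l #|A :&: B|) cardsID setIC cardsID AB.
Qed.

Lemma exchange_eq (T : finType) (A P Q : {set T}) (a a' b b' : T) :
  P :\: A = [set b] -> A :\: P = [set a] -> Q :\: A = [set b'] -> A :\: Q = [set a'] ->
  b != b' -> #|P :\: Q| <= 1 -> a = a'.
Proof.
move=> PA AP QA AQ bb' PQ; apply/eqP/negPn/negP => aa'.
have /setDP [bP bA] : b \in P :\: A by rewrite PA set11.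
have /setDP [a'A a'Q] : a' \in A :\: Q by rewrite AQ set11.
have bQ : b \notin Q.
  by apply: contra bb' => bQ; rewrite -in_set1 -QA inE bA.
have a'P : a' \in P.
  by apply: contraR aa' => a'P; rewrite eq_sym -in_set1 -AP inE a'P.
move: PQ; rewrite leqNgt => /negP; apply; apply/card_gt1P; exists b, a'.
by rewrite !inE bP bQ a'P a'Q; split=> //; apply: contraNneq bA => ->.
Qed.

Section ExchangeFamily.
Variables (U V : finType) (I : {set U}) (K : {set V}) (F : U -> {set V}).
Hypothesis F_sub : forall u, u \in I -> F u \subset K.
Hypothesis F_exchange : forall u v, u \in I -> v \in I -> F u != F v -> #|F u :\: F v| = 1.
Hypothesis F_nonempty : forall u, u \in I -> F u != set0.
Hypothesis F_cover : forall x, x \in K -> exists2 u, u \in I & x \in F u.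
Hypothesis F_cocover : forall x, x \in K -> exists2 u, u \in I & x \notin F u.

Lemma F_diff_le1 u v : u \in I -> v \in I -> #|F u :\: F v| <= 1.
Proof.
move=> uI vI; have [->|uv] := eqVneq (F u) (F v); first by rewrite setDv cards0.
by rewrite F_exchange.
Qed.

Lemma F_card_eq u v : u \in I -> v \in I -> #|F u| = #|F v|.
Proof.
move=> uI vI; have [->//|uv] := eqVneq (F u) (F v).
rewrite -(cardsID (F v) (F u)) -(cardsID (F u) (F v)) setIC !F_exchange //.
by rewrite eq_sym.
Qed.

Lemma F_exchange_pair u v : u \in I -> v \in I -> F u != F v ->
  exists b a, F u :\: F v = [set b] /\ F v :\: F u = [set a].
Proof.
move=> uI vI uv.
have /eqP/cards1P [b ->] := F_exchange uI vI uv.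
rewrite eq_sym in uv.
by have /eqP/cards1P [a ->] := F_exchange vI uI uv; exists b, a.
Qed.

Lemma exchange_family_small_side u0 : u0 \in I ->
  (#|F u0| <= 1) || (#|K :\: F u0| <= 1).
Proof.
move=> u0I.
have [//|/card_gt1P [a1 [a2 [a1A a2A a12]]]] := leqP #|F u0| 1.
have [//|/card_gt1P [b1 [b2 [b1KA b2KA b12]]]] := leqP #|K :\: F u0| 1.
exfalso.
have swap_in x : x \in K :\: F u0 -> exists v a,
    [/\ v \in I, F v :\: F u0 = [set x] & F u0 :\: F v = [set a]].
  case/setDP=> xK xA; have [v vI xv] := F_cover xK.
  have [|b [a [vA Av]]] := F_exchange_pair vI u0I; first by apply: contraNneq xA => <-.
  have /set1P xb : x \in [set b] by rewrite -vA inE xA.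
  by exists v, a; rewrite vA xb.
have swap_out x : x \in F u0 -> exists w b,
    [/\ w \in I, F w :\: F u0 = [set b] & F u0 :\: F w = [set x]].
  move=> xA; have [w wI xw] := F_cocover (subsetP (F_sub u0I) x xA).
  have [|b [a [wA Aw]]] := F_exchange_pair wI u0I; first by apply: contraNneq xw => ->.
  have /set1P xa : x \in [set a] by rewrite -Aw inE xw.
  by exists w, b; rewrite Aw xa.
(* Adding b1 resp. b2 to F u0 must remove the same element c; a set avoiding
   some other a of F u0 then differs from one of these two in two elements. *)
have [v1 [c [v1I Fv1 Av1]]] := swap_in b1 b1KA.
have [v2 [c2 [v2I Fv2 Av2]]] := swap_in b2 b2KA.
have c2c : c2 = c by apply: exchange_eq Fv2 Av2 Fv1 Av1 _ (F_diff_le1 v2I v1I); rewrite eq_sym.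
subst c2.
have [a [aA ac]] : exists a, a \in F u0 /\ a != c.
  by have [a1c|] := eqVneq a1 c; [exists a2; rewrite -a1c eq_sym | exists a1].
have [w [b [wI Fw Aw]]] := swap_out a aA.
suff : c = a by move=> ca; rewrite ca eqxx in ac.
have [bb1|bb1] := eqVneq b b1.
  by apply: exchange_eq Fv2 Av2 Fw Aw _ (F_diff_le1 v2I wI); rewrite bb1 eq_sym.
by apply: exchange_eq Fv1 Av1 Fw Aw _ (F_diff_le1 v1I wI); rewrite eq_sym.
Qed.

Lemma exchange_family_star_or_costar :
  (forall u, u \in I -> #|F u| = 1) \/ (forall u, u \in I -> #|K :\: F u| = 1).
Proof.
have [->|[u0 u0I]] := set_0Vmem I; first by left=> u; rewrite inE.
have cardKF u : u \in I -> #|K :\: F u| = #|K| - #|F u|.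
  by move=> uI; rewrite cardsD (setIidPr (F_sub uI)).
have [small|large] := leqP #|F u0| 1.
  left=> u uI; rewrite (F_card_eq uI u0I); apply/eqP; rewrite eqn_leq small.
  by rewrite card_gt0 F_nonempty.
have /orP [|co_small] := exchange_family_small_side u0I; first by rewrite leqNgt large.
right=> u uI; rewrite cardKF // (F_card_eq uI u0I) -cardKF //.
apply/eqP; rewrite eqn_leq co_small card_gt0; apply/set0Pn.
have [x [_ [xF _ _]]] := card_gt1P large.
have [w wI xw] := F_cocover (subsetP (F_sub u0I) x xF).
have [|b [a [wu0 _]]] := F_exchange_pair wI u0I; first by apply: contraNneq xw => ->.
have /setDP [bw bu0] : b \in F w :\: F u0 by rewrite wu0 set11.
by exists b; rewrite inE bu0 (subsetP (F_sub wI)).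
Qed.

End ExchangeFamily.

Definition complete_case (T : finType) (e : rel T) (K I : {set T}) : Prop :=
  phi_complete e I /\ #|K| = #|I|.

Definition max_clique_case (T : finType) (e : rel T) (K I : {set T}) : Prop :=
  [/\ #|K| = phi_omega e I, #|K| < #|I|,
      (forall v, v \in I -> exists C, phi_max_clique e I C /\ v \in C) &
      (forall v, v \in I -> #|K| <= 1 + phi_deg e I v)].

Definition factor_labelling (T : finType) (e : rel T) (K I : {set T}) (g : T -> T) : Prop :=
  [/\ forall u v, u \in I -> v \in I -> phi_adj e I u v = (g u != g v),
      forall u, u \in I -> g u \in K &
      forall x, x \in K -> exists2 u, u \in I & g u = x].

Section LabelledFactor.
Variables (T : finType) (e : rel T) (K I : {set T}) (g : T -> T).
Hypothesis phi_adj_label :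
  forall u v, u \in I -> v \in I -> phi_adj e I u v = (g u != g v).
Hypothesis label_in : forall u, u \in I -> g u \in K.
Hypothesis label_onto : forall x, x \in K -> exists2 u, u \in I & g u = x.

Lemma label_section_through v : v \in I -> exists h : T -> T,
  (forall x, x \in K -> h x \in I /\ g (h x) = x) /\ h (g v) = v.
Proof.
move=> vI; exists (fun x => if x == g v then v else odflt x [pick u in I | g u == x]).
split=> [x xK|]; last by rewrite eqxx.
have [->//|_] := eqVneq x (g v); case: pickP => [u /andP [uI /eqP]//|none].
by have [u uI gu] := label_onto xK; have := none u; rewrite uI gu eqxx.
Qed.

Lemma phi_clique_card_le C : phi_clique e I C -> #|C| <= #|K|.
Proof.
case/andP=> /subsetP CI /forall_inP Cclique.
have g_inj : {in C &, injective g}.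
  move=> u v uC vC guv; apply/eqP; apply: contraT => uv.
  by move: (forall_inP (Cclique u uC) v vC); rewrite uv phi_adj_label ?CI ?guv ?eqxx.
rewrite -(card_in_imset g_inj); apply/subset_leq_card/subsetP => _ /imsetP [u uC ->].
exact/label_in/CI.
Qed.

Lemma phi_clique_section h : (forall x, x \in K -> h x \in I /\ g (h x) = x) ->
  phi_clique e I (h @: K) /\ #|h @: K| = #|K|.
Proof.
move=> hsec; split; last first.
  apply: card_in_imset => x y xK yK hxy.
  by have [_ <-] := hsec x xK; have [_ <-] := hsec y yK; rewrite hxy.
apply/andP; split; first by apply/subsetP => _ /imsetP [x xK ->]; case: (hsec x xK).
apply/forall_inP => _ /imsetP [x xK ->]; apply/forall_inP => _ /imsetP [y yK ->].
have [hxI ghx] := hsec x xK; have [hyI ghy] := hsec y yK.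
by apply/implyP => hxy; rewrite phi_adj_label // ghx ghy; apply: contraNneq hxy => ->.
Qed.

Lemma phi_omega_label : phi_omega e I = #|K|.
Proof.
apply/eqP; rewrite eqn_leq; apply/andP; split.
  by apply/bigmax_leqP => C; apply: phi_clique_card_le.
have [->|[x xK]] := set_0Vmem K; first by rewrite cards0.
have [v vI _] := label_onto xK; have [h [hsec _]] := label_section_through vI.
have [hK <-] := phi_clique_section hsec.
exact: (@leq_bigmax_cond _ (phi_clique e I) (fun C => #|C|) _ hK).
Qed.

Lemma phi_max_clique_through v : v \in I -> exists C, phi_max_clique e I C /\ v \in C.
Proof.
move=> vI; have [h [hsec hv]] := label_section_through vI.
have [hK hKcard] := phi_clique_section hsec.
exists (h @: K); rewrite /phi_max_clique hK hKcard phi_omega_label eqxx.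
by split=> //; rewrite -hv imset_f ?label_in.
Qed.

Lemma label_image_sup : K \subset g @: I.
Proof. by apply/subsetP => x /label_onto [u uI <-]; apply: imset_f. Qed.

Lemma card_K_le_I : #|K| <= #|I|.
Proof. exact: leq_trans (subset_leq_card label_image_sup) (leq_imset_card g I). Qed.

Lemma phi_complete_label : #|K| = #|I| -> phi_complete e I.
Proof.
move=> KI u v uI vI uv; rewrite phi_adj_label //; apply: contra uv => /eqP guv.
have /imset_injP g_inj : #|g @: I| == #|I|.
  by rewrite eqn_leq leq_imset_card -KI subset_leq_card ?label_image_sup.
by rewrite (g_inj u v uI vI guv).
Qed.

Lemma phi_deg_label v : v \in I -> #|K| <= 1 + phi_deg e I v.
Proof.
move=> vI; have [h [hsec _]] := label_section_through vI.
rewrite (cardsD1 (g v) K) label_in // leq_add2l /phi_deg.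
have <- : #|h @: (K :\ g v)| = #|K :\ g v|.
  apply: card_in_imset => x y /setD1P [_ xK] /setD1P [_ yK] hxy.
  by have [_ <-] := hsec x xK; have [_ <-] := hsec y yK; rewrite hxy.
apply/subset_leq_card/subsetP => _ /imsetP [x /setD1P [xv xK] ->].
have [hxI ghx] := hsec x xK.
by rewrite inE phi_adj_label // ghx eq_sym.
Qed.

Lemma factor_dichotomy :
  (complete_case e K I /\ ~ max_clique_case e K I) \/
  (~ complete_case e K I /\ max_clique_case e K I).
Proof.
have [KI|KI] := eqVneq #|K| #|I|.
  by left; split=> [|[_]]; [split=> //; apply: phi_complete_label | rewrite KI ltnn].
right; split=> [[_ KI']|]; first by rewrite KI' eqxx in KI.
split; [by rewrite phi_omega_label | | exact: phi_max_clique_through | exact: phi_deg_label].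
by rewrite ltn_neqAle KI card_K_le_I.
Qed.

End LabelledFactor.

Definition nbhd (T : finType) (e : rel T) (u : T) : {set T} := [set x | e u x].

Section SplitGraph.
Variables (T : finType) (e : rel T) (K I : {set T}).
Hypothesis e_sym : symmetric e.
Hypothesis KI_split : split_bipartition e K I.
Local Notation N := (nbhd e).

Lemma K_notin_I x : x \in K -> x \notin I.
Proof.
have [KI0 _ _ _] := KI_split; move=> xK; apply/negP => xI.
by have := in_set0 x; rewrite -KI0 inE xK xI.
Qed.

Lemma K_neq_I x y : x \in K -> y \in I -> x != y.
Proof. by move=> xK; apply: contraTneq => <-; apply: K_notin_I. Qed.

Lemma memK_of_notI x : x \notin I -> x \in K.
Proof.
have [_ KIT _ _] := KI_split; move=> xI.
by have := in_setT x; rewrite -KIT inE (negbTE xI) orbF.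
Qed.

Lemma memK_of_edge x y : x \in I -> e x y -> y \in K.
Proof.
have [_ _ _ Iindep] := KI_split; move=> xI xy; apply: memK_of_notI.
by apply: contraL xy => /(Iindep x y xI).
Qed.

Lemma memI_of_nonedge x y : x \in K -> x != y -> ~~ e x y -> y \in I.
Proof.
have [_ _ Kclique _] := KI_split; move=> xK xy; apply: contraR => yI.
by rewrite Kclique // memK_of_notI.
Qed.

Lemma nbhd_sub u : u \in I -> N u \subset K.
Proof. by move=> uI; apply/subsetP => x; rewrite inE; apply: memK_of_edge. Qed.

Lemma two_switch_split a b c d : two_switch e a b c d ->
  [/\ a \in I, d \in I, b \in N a :\: N d & c \in N d :\: N a] \/
  [/\ b \in I, c \in I, a \in N b :\: N c & d \in N c :\: N b].
Proof.
case/and5P=> abcd ab cd ac bd.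
have a_c : a != c by apply: contraTneq abcd => ->; rewrite /= !inE eqxx /= !orbT.
have b_d : b != d by apply: contraTneq abcd => ->; rewrite /= !inE eqxx /= !orbT andbF.
have [aI|/memK_of_notI aK] := boolP (a \in I).
  have bK := memK_of_edge aI ab.
  have dI := memI_of_nonedge bK b_d bd.
  by left; rewrite !inE dI ab (e_sym d b) bd (e_sym d c) cd ac.
have cI := memI_of_nonedge aK a_c ac.
have dK := memK_of_edge cI cd.
have bI : b \in I by apply: memI_of_nonedge dK _ _; rewrite 1?eq_sym // e_sym.
by right; rewrite !inE bI cI (e_sym b a) ab (e_sym c a) ac cd bd.
Qed.

Lemma induced_P4_private u v x y : u \in I -> v \in I -> u != v ->
  x \in N u :\: N v -> y \in N v :\: N u -> induced_P4 e [set u; x; y; v].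
Proof.
have [_ _ Kclique Iindep] := KI_split.
move=> uI vI uv /setDP [ux xv] /setDP [vy yu]; rewrite !inE in ux xv vy yu.
have xK := memK_of_edge uI ux; have yK := memK_of_edge vI vy.
have xy : x != y by apply: contraNneq xv => ->.
apply/existsP; exists u; apply/existsP; exists x; apply/existsP; exists y.
apply/existsP; exists v; rewrite eqxx ux Kclique // (e_sym y) vy yu (e_sym x) xv.
rewrite Iindep //= !inE !negb_or xy uv !andbT.
by rewrite !(eq_sym u) !K_neq_I.
Qed.

Lemma induced_P4_split X : induced_P4 e X -> exists a b c d,
  X = [set a; b; c; d] /\
  [/\ a \in I, d \in I, b \in N a :\: N d & c \in N d :\: N a].
Proof.
have [_ _ _ Iindep] := KI_split.
case/existsP=> a /existsP [b /existsP [c /existsP [d]]].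
case/and5P=> abcd /eqP -> ab bc /and4P [cd ac bd _].
have /two_switch_split [] : two_switch e a b c d by apply/and5P.
  by exists a, b, c, d.
by case=> bI cI _ _; move: (Iindep b c bI cI); rewrite bc.
Qed.

Lemma sigma_private u v : u \in I -> v \in I -> u != v ->
  sigma e u v = #|N u :\: N v| * #|N v :\: N u|.
Proof.
move=> uI vI uv; rewrite -cardsX /sigma.
set P := setX _ _; pose P4 (p : T * T) := [set u; p.1; p.2; v].
have memP4 x y z : z \in P4 (x, y) -> z \in K -> (z == x) || (z == y).
  by move=> + zK; rewrite !inE (negbTE (K_neq_I zK uI)) (negbTE (K_neq_I zK vI)) orbF.
have P4_inj : {in P &, injective P4}.
  move=> [x y] [x' y'] /setXP [ux /setDP [vy yu]] /setXP [/setDP [ux' xv'] vy'] eqP4.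
  have xK := subsetP (nbhd_sub uI) x (setDP ux).1.
  have yK := subsetP (nbhd_sub vI) y vy.
  have /memP4 /(_ xK) /orP [/eqP ->|/eqP xy'] : x \in P4 (x', y').
      by rewrite -eqP4 !inE eqxx !orbT.
    have /memP4 /(_ yK) /orP [/eqP yx'|/eqP -> //] : y \in P4 (x', y').
      by rewrite -eqP4 !inE eqxx !orbT.
    by rewrite yx' ux' in yu.
  by move: ux vy'; rewrite xy' => /setDP [uy' _] /setDP [_]; rewrite uy'.
rewrite -(card_in_imset P4_inj); apply: eq_card => X; rewrite [in LHS]inE.
apply/and3P/imsetP => [[uX vX /induced_P4_split [a [b [c [d [XE [aI dI ba ca]]]]]]]|].
  have bK := subsetP (nbhd_sub aI) b (setDP ba).1.
  have cK := subsetP (nbhd_sub dI) c (setDP ca).1.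
  have memI z : z \in X -> z \in I -> (z == a) || (z == d).
    move=> + zI; rewrite XE !inE (eq_sym z b) (eq_sym z c).
    by rewrite (negbTE (K_neq_I bK zI)) (negbTE (K_neq_I cK zI)) !orbF.
  case/orP: (memI u uX uI) => /eqP Eu; case/orP: (memI v vX vI) => /eqP Ev;
    try (by rewrite Eu Ev eqxx in uv); rewrite -Eu -Ev in XE ba ca.
    by exists (b, c); [apply/setXP | rewrite XE].
  exists (c, b); first by apply/setXP.
  by rewrite XE /P4 /=; apply/setP => z; rewrite !inE; do !case: eqP.
by case=> -[x y] /setXP [ux vy] ->; rewrite !inE !eqxx !orbT induced_P4_private.
Qed.
Lemma active_private_P4 z : active_vertex e z -> exists p q x y,
  [/\ p \in I, q \in I, x \in N p :\: N q, y \in N q :\: N p & z \in [set p; x; y; q]].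
Proof.
case=> a [b [c [d [/two_switch_split [] [pI qI xpq yqp] zabcd]]]];
  by do 4 eexists; split; [exact: pI | exact: qI | exact: xpq | exact: yqp |
    move: zabcd; rewrite !inE; do !case: eqP].
Qed.

Lemma active_K_private x : active_vertex e x -> x \in K ->
  (exists2 u, u \in I & x \in N u) /\ (exists2 u, u \in I & x \notin N u).
Proof.
case/active_private_P4=> p [q [y [z [pI qI /setDP [yp yq] /setDP [zq zp]]]]] + xK.
rewrite !inE -!orbA => /or4P [] /eqP xE; rewrite xE in xK.
- by move: (K_notin_I xK); rewrite pI.
- by rewrite xE; split; [exists p | exists q].
- by rewrite xE; split; [exists q | exists p].
- by move: (K_notin_I xK); rewrite qI.
Qed.

Lemma active_I_nbhd u : active_vertex e u -> u \in I -> N u != set0.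
Proof.
case/active_private_P4=> p [q [x [y [pI qI /setDP [xp _] /setDP [yq _]]]]] + uI.
have xK := subsetP (nbhd_sub pI) x xp; have yK := subsetP (nbhd_sub qI) y yq.
rewrite !inE -!orbA => /or4P [] /eqP uE; rewrite uE in uI *.
- by apply/set0Pn; exists x.
- by move: (K_notin_I xK); rewrite uI.
- by move: (K_notin_I yK); rewrite uI.
- by apply/set0Pn; exists y.
Qed.

Hypothesis Phi_simple : phi_simple e I.

Lemma phi_adj_private u v : u \in I -> v \in I ->
  phi_adj e I u v = (u != v) && (#|N u :\: N v| * #|N v :\: N u| == 1).
Proof.
move=> uI vI; rewrite /phi_adj uI vI /=; have [->|uv] /= := eqVneq u v; first by [].
have := Phi_simple uI vI uv; rewrite sigma_private //.
by case: (_ * _) => [|[|]].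
Qed.

Lemma phi_adj_card_nbhd u v : phi_adj e I u v -> #|N u| = #|N v|.
Proof.
move=> uv; have /and3P [uI vI _] := uv.
move: uv; rewrite phi_adj_private // muln_eq1 => /and3P [_ /eqP uv /eqP vu].
by rewrite -(cardsID (N v) (N u)) -(cardsID (N u) (N v)) uv vu setIC.
Qed.

Hypothesis Phi_connected : phi_connected e I.

Lemma card_nbhd_eq u v : u \in I -> v \in I -> #|N u| = #|N v|.
Proof.
move=> uI vI; case/connectP: (Phi_connected uI vI) => p; elim: p u {uI} => [|w p IHp] u /=.
  by move=> _ ->.
by case/andP=> /phi_adj_card_nbhd -> /IHp.
Qed.

Lemma nbhd_exchange u v : u \in I -> v \in I -> N u != N v -> #|N u :\: N v| = 1.
Proof.
move=> uI vI NuNv; have uv : u != v by apply: contraNneq NuNv => ->.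
have := Phi_simple uI vI uv; rewrite sigma_private // -(card_setD_sym (card_nbhd_eq uI vI)).
have : 0 < #|N u :\: N v|.
  rewrite card_gt0 setD_eq0; apply: contra NuNv => NuNv.
  by rewrite eqEcard NuNv (card_nbhd_eq vI uI) leqnn.
by case: #|_| => [|[|]].
Qed.

Lemma phi_adj_nbhd u v : u \in I -> v \in I -> phi_adj e I u v = (N u != N v).
Proof.
move=> uI vI; rewrite phi_adj_private //; have [->|NuNv] := eqVneq (N u) (N v).
  by rewrite setDv cards0 andbF.
rewrite !nbhd_exchange // 1?eq_sym //.
by rewrite andbT; apply: contraNneq NuNv => ->.
Qed.

Lemma labelling_of_singletons (M : T -> {set T}) :
  (forall u, u \in I -> #|M u| = 1) ->
  (forall u, u \in I -> M u \subset K) ->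
  (forall u v, u \in I -> v \in I -> (N u == N v) = (M u == M v)) ->
  (forall x, x \in K -> exists2 u, u \in I & x \in M u) ->
  exists g, factor_labelling e K I g.
Proof.
move=> M1 MK NM Mcover; pose g u := odflt u [pick x in M u]; exists g.
have Mg u : u \in I -> M u = [set g u].
  move=> uI; have /eqP/cards1P [x Mx] := M1 u uI.
  rewrite /g Mx; case: pickP => [y /set1P -> //|/(_ x)].
  by rewrite set11.
split=> [u v uI vI|u uI|x /Mcover [u uI]].
- by rewrite phi_adj_nbhd // NM // (Mg u uI) (Mg v vI) (inj_eq set1_inj).
- by apply: (subsetP (MK u uI)); rewrite (Mg u uI) set11.
- by rewrite (Mg u uI) => /set1P ->; exists u.
Qed.

Hypothesis Active : active_graph e.

Lemma exists_factor_labelling : exists g, factor_labelling e K I g.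
Proof.
have cover x : x \in K -> exists2 u, u \in I & x \in N u.
  by move=> /(active_K_private (Active x)) [].
have cocover x : x \in K -> exists2 u, u \in I & x \notin N u.
  by move=> /(active_K_private (Active x)) [].
have nonempty u : u \in I -> N u != set0 := active_I_nbhd (Active u).
have [star|costar] := exchange_family_star_or_costar nbhd_sub nbhd_exchange
  nonempty cover cocover.
  exact: labelling_of_singletons star nbhd_sub (fun _ _ _ _ => erefl) cover.
apply: (labelling_of_singletons costar) => [u uI|u v uI vI|x xK].
- exact: subsetDl.
- have KK w : w \in I -> K :\: (K :\: N w) = N w.
    by move=> wI; rewrite setDDr setDv set0U (setIidPr (nbhd_sub wI)).
  by apply/eqP/eqP => [->//|E]; rewrite -(KK u uI) -(KK v vI) E.
- by have [u uI xu] := cocover x xK; exists u; rewrite // inE xu.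
Qed.

End SplitGraph.

Theorem theorem5p2 (T : finType) (e : rel T) (K I : {set T}) :
  simple_graph e -> split_bipartition e K I -> active_graph e ->
  phi_simple e I -> phi_connected e I ->
  let P1 := phi_complete e I /\ #|K| = #|I| in
  let P2 := [/\ #|K| = phi_omega e I, #|K| < #|I|,
               (forall v, v \in I -> exists C, phi_max_clique e I C /\ v \in C) &
               (forall v, v \in I -> #|K| <= 1 + phi_deg e I v)] in
  (P1 /\ ~ P2) \/ (~ P1 /\ P2).
Proof.
move=> [e_sym _] KI_split active Phi_simple Phi_connected.
have [g [adj_g g_in g_onto]] :=
  exists_factor_labelling e_sym KI_split Phi_simple Phi_connected active.
exact: factor_dichotomy adj_g g_in g_onto.
Qed.
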